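(* Let $(X,\mathcal{M},\mu)$ be a measure space and $\Phi$ an $N^*$-function for which there is a constant $k\ge2$ with $\Phi(kx)=2\Phi(x)$ for all $x>0$. Then $\|f\|_\Phi=\inf\{\lambda>0:\int_X\Phi(|f|/\lambda)\,d\mu\le1\}$ is a quasi-norm on $L_\Phi(X)$: $\|f\|_\Phi=0$ iff $f=0$, $\|\alpha f\|_\Phi=|\alpha|\,\|f\|_\Phi$ for $\alpha\in\mathbb{R}$, and $\|f+g\|_\Phi\le k(\|f\|_\Phi+\|g\|_\Phi)$ for all $f,g\in L_\Phi(X)$.
   Context: An $N^*$-function is a function $\Phi:\mathbb{R}\to\mathbb{R}$ of the form $\Phi(x)=\int_0^{|x|}p(t)\,dt<+\infty$ for all $x$, where $p:[0,\infty)\to[0,\infty]$ is right-continuous, positive on $(0,\infty)$, non-increasing, and satisfies $\lim_{t\to0^+}p(t)=+\infty$ and $\lim_{t\to+\infty}p(t)=0$. $L_\Phi(X)$ is the space of (classes modulo a.e. equality of) measurable $f:X\to\mathbb{R}$ with $\int_X\Phi(f)\,d\mu<\infty$. *)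

From HB Require Import structures.
From mathcomp Require Import all_boot all_order all_algebra.
From mathcomp Require Import all_classical all_reals all_analysis.
Set Implicit Arguments. Unset Strict Implicit. Unset Printing Implicit Defensive.
Import Order.TTheory GRing.Theory Num.Theory.
Import numFieldNormedType.Exports.
Local Open Scope classical_set_scope.
Local Open Scope ring_scope.

(* The density p of an N*-function: p : [0,oo) -> [0,+oo] (values outside
   [0,oo) are irrelevant). *)
Definition Nstar_density (R : realType) (p : R -> \bar R) : Prop :=
  [/\ ((forall t, 0 <= t -> (0 <= p t)%E) /\
      (forall t, 0 < t -> (0 < p t)%E)),
      (forall s t, 0 <= s -> s <= t -> (p t <= p s)%E),
      (forall t, 0 <= t -> (p x @[x --> t^'+] --> p t)),
      (p x @[x --> 0^'+] --> +oo%E)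
    & (p x @[x --> +oo] --> 0%E)].

Definition Nstar_fun (R : realType) (Phi : R -> R) : Prop :=
  exists p : R -> \bar R, Nstar_density p /\
    forall x : R,
      (Phi x)%:E = (\int[@lebesgue_measure R]_(t in `[0%R, `|x|%R]) p t)%E.

(* Membership in L_Phi(X) (representatives of classes). *)
Definition in_LPhi d (T : measurableType d) (R : realType)
    (mu : {measure set T -> \bar R}) (Phi : R -> R) (f : T -> R) : Prop :=
  measurable_fun setT f /\ (\int[mu]_x (Phi (f x))%:E < +oo)%E.

Definition Phi_norm d (T : measurableType d) (R : realType)
    (mu : {measure set T -> \bar R}) (Phi : R -> R) (f : T -> R) : \bar R :=
  ereal_inf [set l%:E | l in
    [set l : R | 0 < l /\ (\int[mu]_x (Phi (`|f x| / l))%:E <= 1)%E]].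

From HB Require Import structures.
From mathcomp Require Import all_boot all_order all_algebra.
From mathcomp Require Import all_classical all_reals all_analysis.
From mathcomp Require Import measurable_realfun ring lra.
Import Order.TTheory GRing.Theory Num.Theory.
Import numFieldNormedType.Exports.
Set Implicit Arguments. Unset Strict Implicit. Unset Printing Implicit Defensive.
Local Open Scope classical_set_scope.
Local Open Scope ring_scope.

(* Homogeneity is a rescaling of the set of admissible [l].  For the
   quasi-triangle inequality, if [l] is admissible for [f] and [m] for [g],
   then pointwise [|f + g| / (l + m) <= max (|f| / l, |g| / m)], so by
   monotonicity and [Phi (x / k) = Phi x / 2] the integral of
   [Phi (|f + g| / (k (l + m)))] is at most the average of the two integrals,
   hence at most 1.  If [||f|| = 0], then for every [m] some admissible
   [l < delta / k^m] exists, and [Phi (|f| / l) >= Phi (k^m) = 2^m Phi 1] on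
   [{|f| > delta}]; so [2^m Phi 1 mu {|f| > delta} <= 1] for all [m], and this
   level set is null. *)

Lemma ge0_le_integral_nonmeas d (T : measurableType d) (R : realType)
    (mu : {measure set T -> \bar R}) (D : set T) (f g : T -> \bar R) :
  (forall x, D x -> (0 <= f x)%E) -> (forall x, D x -> (f x <= g x)%E) ->
  (\int[mu]_(x in D) f x <= \int[mu]_(x in D) g x)%E.
Proof.
move=> f0 fg.
have g0 x : D x -> (0 <= g x)%E by move=> Dx; exact: le_trans (f0 x Dx) (fg x Dx).
rewrite (ge0_integralE _ f0) (ge0_integralE _ g0).
apply: ereal_sup_le => _ [h hf <-]; exists h => // x.
exact: le_trans (hf x) (lee_restrict fg x).
Qed.

Lemma normrD_div_le_max (R : realFieldType) (a b l m : R) : 0 < l -> 0 < m ->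
  `|a + b| / (l + m) <= Num.max (`|a| / l) (`|b| / m).
Proof.
move=> l0 m0; rewrite ler_pdivrMr ?addr_gt0 // mulrDr.
apply: le_trans (ler_normD a b) _; apply: lerD.
- by rewrite -ler_pdivrMr // le_max lexx.
- by rewrite -ler_pdivrMr // le_max lexx orbT.
Qed.

Lemma ge0_expn2_bounded_eq0 (R : realType) (c : R) (x : \bar R) : 0 < c ->
  (0 <= x)%E -> (forall m, ((2 ^+ m * c)%:E * x <= 1)%E) -> x = 0%E.
Proof.
move=> c0; case: x => [r| |] // r0 bound; last first.
  by have := bound 0%N; rewrite mul1r gt0_muley ?lte_fin // leye_eq.
rewrite lee_fin le_eqVlt in r0; case/predU1P: r0 => [<- //|r_gt0]; exfalso.
set m := (Num.truncn ((r * c)^-1)).+1.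
have m_gt : (r * c)^-1 < 2 ^+ m.
  apply: lt_le_trans (truncnS_gt _) _.
  by rewrite -natrX ler_nat ltnW // ltn_expl.
move: m_gt; rewrite -div1r ltr_pdivrMr ?mulr_gt0 // => m_gt.
by have := bound m; rewrite -EFinM lee_fin; nra.
Qed.

Lemma measurable_normr_gt d (T : measurableType d) (R : realType) (f : T -> R)
    (delta : R) :
  measurable_fun setT f -> measurable [set x | delta < `|f x|].
Proof.
move=> mf; have mnf : measurable_fun setT (fun x => `|f x|).
  exact: measurableT_comp (@normr_measurable _ _) mf.
by have := mnf measurableT _ (measurable_itv `]delta, +oo[); rewrite setTI preimage_itvoy.
Qed.

Section Nstar_function.
Variables (R : realType) (Phi : R -> R).
Hypothesis NstarPhi : Nstar_fun Phi.

Lemma Phi_ge0 x : 0 <= Phi x.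
Proof.
case: NstarPhi => p [[[p_ge0 _] _ _ _ _] PhiE]; rewrite -lee_fin PhiE.
by apply: integral_ge0 => t /=; rewrite in_itv /= => /andP[t0 _]; exact: p_ge0.
Qed.

Lemma le_Phi x y : 0 <= x -> x <= y -> Phi x <= Phi y.
Proof.
move=> x0 xy; case: NstarPhi => p [[[p_ge0 _] _ _ _ _] PhiE].
rewrite -lee_fin !PhiE !ger0_norm ?(le_trans x0 xy) //.
rewrite integral_mkcond [leRHS]integral_mkcond.
apply: ge0_le_integral_nonmeas => t _; rewrite /patch.
- by case: ifPn => // /set_mem /=; rewrite in_itv /= => /andP[t0 _]; exact: p_ge0.
- case: ifPn => [/set_mem /=|_].
    rewrite in_itv /= => /andP[t0 tx]; rewrite ifT //.
    by apply/mem_set; rewrite /= in_itv /= t0 (le_trans tx xy).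
  by case: ifPn => // /set_mem /=; rewrite in_itv /= => /andP[t0 _]; exact: p_ge0.
Qed.

Lemma Phi0 : Phi 0 = 0.
Proof.
apply/eqP; rewrite eq_le Phi_ge0 andbT.
case: NstarPhi => p [[[p_ge0 _] _ _ _ _] PhiE]; rewrite -lee_fin PhiE normr0.
apply: le_trans (ge0_le_integral_nonmeas _ (g := cst +oo%E) _ _) _.
- by move=> t /=; rewrite in_itv /= => /andP[t0 _]; exact: p_ge0.
- by move=> t _; rewrite leey.
have null_point := @lebesgue_measure_itv R `[0%R, 0%R]; rewrite /= ltxx in null_point.
by rewrite integral_cst //= null_point mule0.
Qed.

(* Being non-increasing, the density stays above [min (p x) 1 > 0] on [[0, x]]. *)
Lemma Phi_gt0 x : 0 < x -> 0 < Phi x.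
Proof.
move=> x0; case: NstarPhi => p [[[p_ge0 p_gt0] p_noninc _ _ _] PhiE].
have [c c0 p_ge_c] : exists2 c : R, 0 < c & forall t, 0 <= t <= x -> (c%:E <= p t)%E.
  have := p_gt0 x x0; case px : (p x) => [r| |] // r0.
  - by exists r => // t /andP[t0 tx]; rewrite -px; exact: p_noninc.
  - exists 1 => // t /andP[t0 tx].
    by have := p_noninc _ _ t0 tx; rewrite px leye_eq => /eqP ->; rewrite leey.
rewrite -lte_fin PhiE ger0_norm ?ltW //.
apply: lt_le_trans (ge0_le_integral_nonmeas _ (f := cst c%:E) _ _).
- have len := @lebesgue_measure_itv R `[0%R, x]; rewrite /= lte_fin x0 sube0 in len.
  by rewrite integral_cst //= len -EFinM lte_fin mulr_gt0.
- by move=> t _; rewrite lee_fin ltW.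
- by move=> t /=; rewrite in_itv /=; exact: p_ge_c.
Qed.

Lemma measurable_Phi_scaled d (T : measurableType d) (f : T -> R) (c : R) :
  measurable_fun setT f -> 0 <= c ->
  measurable_fun setT (fun x => (Phi (`|f x| / c))%:E).
Proof.
move=> mf c0.
have mPhi : measurable_fun setT (fun y : R => Phi (Num.max y 0)).
  apply: nondecreasing_measurable => // a b ab.
  by apply: le_Phi; [rewrite le_max lexx orbT | rewrite le_max2 // lexx].
apply/measurable_EFinP.
rewrite (_ : (fun x => Phi (`|f x| / c)) =
  (fun y => Phi (Num.max y 0)) \o (fun x => `|f x| / c)).
  apply: measurableT_comp mPhi _; apply: measurable_funM => //.
  exact: measurableT_comp (@normr_measurable _ _) mf.
by apply/funext => x /=; rewrite max_l // divr_ge0.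
Qed.

End Nstar_function.

Section doubling.
Variables (R : realType) (Phi : R -> R) (k : R).
Hypotheses (NstarPhi : Nstar_fun Phi) (k_gt0 : 0 < k).
Hypothesis Phi_doubling : forall x : R, 0 < x -> Phi (k * x) = 2 * Phi x.

Lemma Phi_expnM m y : 0 < y -> Phi (k ^+ m * y) = 2 ^+ m * Phi y.
Proof.
elim: m y => [|m IHm] y y0; first by rewrite !expr0 !mul1r.
by rewrite !exprS -!mulrA Phi_doubling ?IHm // mulr_gt0 // exprn_gt0.
Qed.

Lemma Phi_divk x : 0 <= x -> Phi (x / k) = 2^-1 * Phi x.
Proof.
rewrite le_eqVlt => /predU1P[<-|x0]; first by rewrite mul0r Phi0 // mulr0.
have := Phi_doubling (divr_gt0 x0 k_gt0); rewrite mulrC divfK ?gt_eqF // => ->.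
by rewrite mulrA mulVf ?mul1r.
Qed.

Lemma Phi_quasi_convex (a b l m : R) : 0 < l -> 0 < m ->
  Phi (`|a + b| / (k * (l + m))) <= 2^-1 * (Phi (`|a| / l) + Phi (`|b| / m)).
Proof.
move=> l0 m0; have lm0 : 0 < l + m by rewrite addr_gt0.
rewrite invfM mulrCA mulrC Phi_divk; last by rewrite divr_ge0 // ltW.
apply: ler_wpM2l; first by rewrite invr_ge0.
apply: le_trans (le_Phi NstarPhi _ (normrD_div_le_max a b l0 m0)) _.
  by rewrite divr_ge0 // ltW.
rewrite /Num.max; case: ifP => _.
- by rewrite lerDr (Phi_ge0 NstarPhi).
- by rewrite lerDl (Phi_ge0 NstarPhi).
Qed.

End doubling.

Section Luxemburg_functional.
Context d (T : measurableType d) (R : realType) (mu : {measure set T -> \bar R}).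
Variable Phi : R -> R.
Local Notation "'N' f" := (Phi_norm mu Phi f) (at level 10, f at level 8).

Definition Phi_admissible (f : T -> R) (l : R) : Prop :=
  0 < l /\ (\int[mu]_x (Phi (`|f x| / l))%:E <= 1)%E.

Lemma Phi_norm_ge0 f : (0 <= N f)%E.
Proof. by apply: le_ereal_inf_tmp => _ [l [l0 _] <-]; rewrite lee_fin ltW. Qed.

Lemma Phi_norm_le f l : Phi_admissible f l -> (N f <= l%:E)%E.
Proof. by move=> fl; apply: ereal_inf_lbound; exists l. Qed.

Lemma Phi_norm_lt f (x : R) : (N f < x%:E)%E -> exists2 l, Phi_admissible f l & l < x.
Proof. by move=> /ereal_inf_lt[_ [l fl <-]]; rewrite lte_fin; exists l. Qed.

Lemma Phi_norm_eq0_admissible f : (forall l, 0 < l -> Phi_admissible f l) -> N f = 0%E.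
Proof.
move=> fl; apply/eqP; rewrite eq_le Phi_norm_ge0 andbT.
apply/lee_addgt0Pr => e e0; rewrite add0e; exact/Phi_norm_le/fl.
Qed.

Lemma Phi_normZ f a : Phi 0 = 0 -> N (fun x => a * f x) = (`|a|%:E * N f)%E.
Proof.
move=> Phi_at0; have [->|a0] := eqVneq a 0.
  rewrite normr0 mul0e; apply: Phi_norm_eq0_admissible => l l0; split => //.
  by rewrite integral0_eq ?lee01 // => x _; rewrite mul0r normr0 mul0r Phi_at0.
have a_gt0 : 0 < `|a| by rewrite normr_gt0.
have scale l x : Phi (`|a * f x| / (`|a| * l)) = Phi (`|f x| / l).
  by rewrite normrM invfM mulrACA mulfV ?gt_eqF // mul1r.
rewrite /Phi_norm -ereal_inf_pZl //; congr ereal_inf; apply/seteqP; split.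
- move=> _ [l [l0 fl] <-].
  have la : l = `|a| * (l / `|a|) by rewrite mulrCA mulfV ?gt_eqF ?mulr1.
  exists (l / `|a|)%:E; last by rewrite -EFinM -la.
  exists (l / `|a|) => //; split; first by rewrite divr_gt0.
  by under eq_integral do rewrite -scale -la.
- move=> _ [_ [l [l0 fl] <-] <-]; exists (`|a| * l); last by rewrite EFinM.
  split; first by rewrite mulr_gt0.
  by under eq_integral do rewrite scale.
Qed.

Lemma Phi_norm_le_admissible (c : R) f g h : 0 < c ->
  (forall l m, Phi_admissible f l -> Phi_admissible g m ->
    Phi_admissible h (c * (l + m))) ->
  (N h <= c%:E * (N f + N g))%E.
Proof.
move=> c0 fgh.
have Ng_ninfty : N g != -oo%E by rewrite gt_eqF // (lt_le_trans _ (Phi_norm_ge0 g)) ?ltNyr.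
case Nf : (N f) (Phi_norm_ge0 f) => [r| |] // r0; last first.
  by rewrite addye // gt0_muley ?lte_fin // leey.
case Ng : (N g) (Phi_norm_ge0 g) => [s| |] // s0; last first.
  by rewrite addey // gt0_muley ?lte_fin // leey.
rewrite lee_fin in r0 s0; apply/lee_addgt0Pr => e e0.
set eps := e / (2 * c); have eps0 : 0 < eps by rewrite divr_gt0 ?mulr_gt0.
have [l fl lr] : exists2 l, Phi_admissible f l & l < r + eps.
  by apply: Phi_norm_lt; rewrite Nf lte_fin ltrDl.
have [m gm ms] : exists2 m, Phi_admissible g m & m < s + eps.
  by apply: Phi_norm_lt; rewrite Ng lte_fin ltrDl.
apply: le_trans (Phi_norm_le (fgh _ _ fl gm)) _.
have -> : (c%:E * (r%:E + s%:E) + e%:E)%E = (c * (r + s) + e)%:E.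
  by rewrite EFinD EFinM EFinD.
have -> : c * (r + s) + e = c * (r + s + 2 * eps) by rewrite /eps; field; rewrite gt_eqF.
by rewrite lee_fin ler_wpM2l ?ltW //; lra.
Qed.

End Luxemburg_functional.

Section Phi_quasi_norm.
Context d (T : measurableType d) (R : realType) (mu : {measure set T -> \bar R}).
Variables (Phi : R -> R) (k : R).
Hypotheses (NstarPhi : Nstar_fun Phi) (k_gt0 : 0 < k).
Hypothesis Phi_doubling : forall x : R, 0 < x -> Phi (k * x) = 2 * Phi x.
Local Notation "'N' f" := (Phi_norm mu Phi f) (at level 10, f at level 8).
Local Notation admissible := (Phi_admissible mu Phi).

Lemma Phi_admissibleD (f g : T -> R) (l m : R) :
  measurable_fun setT f -> measurable_fun setT g ->
  admissible f l -> admissible g m -> admissible (fun x => f x + g x) (k * (l + m)).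
Proof.
move=> mf mg [l0 fl] [m0 gm]; split; first by rewrite mulr_gt0 ?addr_gt0.
pose If x := (Phi (`|f x| / l))%:E; pose Ig x := (Phi (`|g x| / m))%:E.
have If0 x : setT x -> (0 <= If x)%E by rewrite lee_fin Phi_ge0.
have Ig0 x : setT x -> (0 <= Ig x)%E by rewrite lee_fin Phi_ge0.
have mIf : measurable_fun setT If by apply: measurable_Phi_scaled => //; exact: ltW.
have mIg : measurable_fun setT Ig by apply: measurable_Phi_scaled => //; exact: ltW.
apply: (@le_trans _ _ (\int[mu]_x ((2^-1)%:E * (If x + Ig x)))%E).
  apply: ge0_le_integral_nonmeas => x _; first by rewrite lee_fin Phi_ge0.
  by rewrite /If /Ig -EFinD -EFinM lee_fin Phi_quasi_convex.
have IfIg0 x : setT x -> (0 <= If x + Ig x)%E by move=> _; rewrite adde_ge0 ?If0 ?Ig0.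
rewrite ge0_integralZl_EFin ?invr_ge0 //; last exact: emeasurable_funD.
rewrite ge0_integralD //.
apply: le_trans (lee_wpmul2l _ (leeD fl gm)) _; first by rewrite lee_fin invr_ge0.
by rewrite -EFinD -EFinM mulVf.
Qed.

Lemma Phi_normD (f g : T -> R) : measurable_fun setT f -> measurable_fun setT g ->
  (N (fun x => (f x + g x)%R) <= k%:E * (N f + N g))%E.
Proof.
move=> mf mg; apply: Phi_norm_le_admissible => // l m.
exact: Phi_admissibleD.
Qed.

Lemma Phi_norm_eq0_level_set (f : T -> R) (delta : R) : measurable_fun setT f ->
  N f = 0%E -> 0 < delta -> mu [set x | delta < `|f x|] = 0%E.
Proof.
move=> mf Nf0 delta0; set E := [set x | delta < `|f x|].
have mE : measurable E by exact: measurable_normr_gt.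
apply: ge0_expn2_bounded_eq0 (Phi_gt0 NstarPhi ltr01) (measure_ge0 mu E) _ => n.
have km0 : 0 < k ^+ n by rewrite exprn_gt0.
have [l [l0 fl] l_lt] : exists2 l, admissible f l & l < delta / k ^+ n.
  by apply: Phi_norm_lt; rewrite Nf0 lte_fin divr_gt0.
rewrite -integral_cst //; apply: le_trans fl; rewrite integral_mkcond.
apply: ge0_le_integral_nonmeas => x _; rewrite /patch.
  by case: ifPn => _ //=; rewrite lee_fin mulr_ge0 ?exprn_ge0 ?(Phi_ge0 NstarPhi).
case: ifPn => [/set_mem /= Ex|_]; last by rewrite lee_fin (Phi_ge0 NstarPhi).
rewrite /= lee_fin -(Phi_expnM k_gt0 Phi_doubling n ltr01) mulr1.
apply: le_Phi => //; first exact: ltW.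
rewrite ler_pdivlMr // mulrC; apply/ltW/(lt_trans _ Ex).
by rewrite -ltr_pdivlMr.
Qed.

Lemma Phi_norm_eq0_ae (f : T -> R) : measurable_fun setT f ->
  N f = 0%E -> f = (fun _ => 0) %[ae mu].
Proof.
move=> mf Nf0.
have null_levels : mu.-negligible (\bigcup_n [set x | n.+1%:R^-1 < `|f x|]).
  apply: negligible_bigcup => n; exists [set x | n.+1%:R^-1 < `|f x|].
  split => //; first exact: measurable_normr_gt.
  by apply: Phi_norm_eq0_level_set; rewrite ?invr_gt0.
apply: negligibleS null_levels => x /= fx_neq0.
have fx_gt0 : 0 < `|f x| by rewrite normr_gt0; apply/eqP => fx0; apply: fx_neq0.
exists (Num.truncn `|f x|^-1) => //=.
by rewrite invf_plt ?posrE // truncnS_gt.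
Qed.

Lemma ae_eq0_Phi_norm (f : T -> R) : measurable_fun setT f ->
  f = (fun _ => 0) %[ae mu] -> N f = 0%E.
Proof.
move=> mf f0; apply: Phi_norm_eq0_admissible => l l0; split => //.
rewrite (@ae_eq_integral _ _ _ mu setT (cst 0%E)) //.
- by rewrite integral0_eq.
- by apply: measurable_Phi_scaled => //; exact: ltW.
- apply: filterS f0 => x fx0 _.
  by rewrite fx0 // normr0 mul0r (Phi0 NstarPhi).
Qed.

End Phi_quasi_norm.

Theorem mainTheorem10 (d : measure_display) (T : measurableType d)
    (R : realType) (mu : {measure set T -> \bar R}) (Phi : R -> R) (k : R) :
  Nstar_fun Phi ->
  2 <= k ->
  (forall x : R, 0 < x -> Phi (k * x) = 2 * Phi x) ->
  [/\ (forall f : T -> R, in_LPhi mu Phi f ->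
         Phi_norm mu Phi f = 0%E <-> f = (fun _ => 0) %[ae mu]),
      (forall (f : T -> R) (a : R), in_LPhi mu Phi f ->
         Phi_norm mu Phi (fun x => (a * f x)%R) = (`|a|%:E * Phi_norm mu Phi f)%E)
    & (forall f g : T -> R, in_LPhi mu Phi f -> in_LPhi mu Phi g ->
         (Phi_norm mu Phi (fun x => (f x + g x)%R)
            <= k%:E * (Phi_norm mu Phi f + Phi_norm mu Phi g))%E)].
Proof.
move=> NstarPhi k_ge2 Phi_doubling; have k_gt0 : 0 < k by apply: lt_le_trans k_ge2.
split.
- move=> f [mf _].
  exact: conj (Phi_norm_eq0_ae NstarPhi k_gt0 Phi_doubling mf)
              (ae_eq0_Phi_norm NstarPhi mf).
- by move=> f a _; apply: Phi_normZ; exact: Phi0.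
- by move=> f g [mf _] [mg _]; apply: Phi_normD.
Qed.
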